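(* Let $f_1,\dots,f_n\colon\mathbb R\to\mathbb R$ and $\eta\colon\mathbb R\times\mathbb R\to(0,\infty)$ be smooth with $\eta(x,0)=1$, and consider the metric $(\star)$ on $\mathbb R^{n+2}$, whose scalar curvature is $\mathrm{Scal}(x,u)=-2\eta_{uu}(x,u)/\eta(x,u)$. Let $k_\gamma(x)=-\eta_u(x,0)$. If $\mathrm{Scal}<0$ everywhere, $|k_\gamma(x)|\le\sqrt{\tfrac12|\mathrm{Scal}(x,u)|}$ for all $x,u$, and $|k_\gamma(x)|\le\Lambda$ for all $x$ and some constant $\Lambda$, then the metric is complete.
   Context: The metric $(\star)$: on $\mathbb R\times\mathbb R^{n+1}$ with coordinates $(x,u,v_1,\dots,v_n)$, conventions $v_0=u$, $v_{-1}=v_{n+1}=0$, $f_0=f_{n+1}=0$, $g_{\eta,f}=\eta(x,u)^2dx^2+\sum_{j=0}^n\big(dv_j+(v_{j-1}f_j(x)-v_{j+1}f_{j+1}(x))dx\big)^2$. $k_\gamma$ is the geodesic curvature of the curve $\gamma(x)=(x,0,\dots,0)$. *)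

From Stdlib Require Import Reals.
From Coquelicot Require Import Coquelicot.
Open Scope R_scope.

Definition smooth1 (g : R -> R) : Prop := forall (k : nat) (x : R), ex_derive_n g k x.

Definition smooth2 (h : R -> R -> R) : Prop :=
  exists D : nat -> nat -> R -> R -> R,
    (forall x u, D 0%nat 0%nat x u = h x u) /\
    (forall i j x u, is_derive (fun y => D i j y u) x (D (S i) j x u)) /\
    (forall i j x u, is_derive (fun w => D i j x w) u (D i (S j) x u)) /\
    (forall i j x u, continuous (fun p : R * R => D i j (fst p) (snd p)) (x, u)).

Definition eta_u (eta : R -> R -> R) (x u : R) : R := Derive (fun w => eta x w) u.
Definition eta_uu (eta : R -> R -> R) (x u : R) : R := Derive (fun w => eta_u eta x w) u.

(* scalar curvature of the metric (star), as given by the stated formula *)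
Definition Scal (eta : R -> R -> R) (x u : R) : R := - 2 * eta_uu eta x u / eta x u.

(* geodesic curvature of gamma(x) = (x,0,...,0), as given *)
Definition k_gamma (eta : R -> R -> R) (x : R) : R := - eta_u eta x 0.

(* f_j extended by the conventions f_0 = f_{n+1} = 0 (only 1 <= j <= n used) *)
Definition fext (n : nat) (f : nat -> R -> R) (j : nat) : R -> R :=
  if andb (Nat.leb 1 j) (Nat.leb j n) then f j else fun _ => 0.

(* A point of R x R^{n+1}: (x, v) with v 0 = u, v j = v_j for 1 <= j <= n;
   coordinates v j with j > n are irrelevant. *)
Definition point : Type := (R * (nat -> R))%type.

Record curve : Type := mkCurve { cx : R -> R ; cv : nat -> R -> R }.

(* g_{eta,f}(c'(t), c'(t)) *)
Definition speed2 (n : nat) (f : nat -> R -> R) (eta : R -> R -> R) (c : curve) (t : R) : R :=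
  (eta (cx c t) (cv c 0%nat t))^2 * (Derive (cx c) t)^2
  + sum_f_R0 (fun j =>
      (Derive (cv c j) t
       + (cv c (j - 1)%nat t * fext n f j (cx c t)
          - cv c (S j) t * fext n f (S j) (cx c t)) * Derive (cx c) t)^2) n.

(* C^1 curves (parametrized on [0,1], given as C^1 maps on R) *)
Definition C1 (g : R -> R) : Prop :=
  (forall t, ex_derive g t) /\ (forall t, continuous (Derive g) t).

Definition admissible (n : nat) (c : curve) : Prop :=
  C1 (cx c) /\ forall j, (j <= n)%nat -> C1 (cv c j).

Definition joins (n : nat) (c : curve) (p q : point) : Prop :=
  cx c 0 = fst p /\ cx c 1 = fst q /\
  forall j, (j <= n)%nat -> cv c j 0 = snd p j /\ cv c j 1 = snd q j.

Definition curve_length (n : nat) (f : nat -> R -> R) (eta : R -> R -> R) (c : curve) : R :=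
  RInt (fun t => sqrt (speed2 n f eta c t)) 0 1.

(* d(p,q) < eps for the Riemannian distance d (infimum of lengths of curves) *)
Definition dist_lt (n : nat) (f : nat -> R -> R) (eta : R -> R -> R) (p q : point) (eps : R) : Prop :=
  exists c, admissible n c /\ joins n c p q /\ curve_length n f eta c < eps.

Definition metric_complete (n : nat) (f : nat -> R -> R) (eta : R -> R -> R) : Prop :=
  forall s : nat -> point,
    (forall eps, 0 < eps -> exists N : nat, forall k m : nat, (N <= k)%nat -> (N <= m)%nat ->
        dist_lt n f eta (s k) (s m) eps) ->
    exists p : point, forall eps, 0 < eps -> exists N : nat, forall k : nat, (N <= k)%nat ->
        dist_lt n f eta (s k) p eps.

(* Write a point of R x R^{n+1} as (x, v) with v = (v_0, ..., v_n), v_0 = u,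
   and let <v> = sqrt (1 + v_0^2 + ... + v_n^2).  For fixed x, g = eta(x, .)
      satisfies g(0) = 1, g'(0) = -k_gamma(x) and, by the curvature
      hypothesis, g'' >= k_gamma(x)^2 g; an ODE comparison gives
      eta(x, u) >= exp (- k_gamma(x) u) >= exp (- Lambda |u|).
   2. Estimates along a curve, in terms of its arclength.  The coupling
      terms v_{j-1} f_j - v_{j+1} f_{j+1} are an infinitesimal rotation of v,
      so <v> is 1-Lipschitz for arclength; where eta >= C the abscissa x is
      (1/C)-Lipschitz; where moreover |v_i| <= M and |f_i| <= B, each v_j is
      (1 + 2MB/C)-Lipschitz.
   3. Completeness.  By 2, a Cauchy sequence and all short curves between
      its late terms stay in a region <v> <= M, where eta >= exp (-Lambda M)
      by 1; hence its x-coordinates are Cauchy, the f_j are bounded near the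
      limit abscissa, and its v-coordinates are Cauchy as well.  Conversely,
      convergence of all coordinates implies convergence for the Riemannian
      distance, by estimating the length of straight segments. *)

From Pilot Require Import Defs.
From Stdlib Require Import Reals Lra Psatz.
From Coquelicot Require Import Coquelicot.
Open Scope R_scope.

Lemma le_of_deriv_nonneg (h h' : R -> R) (a b : R) : a <= b ->
  (forall t, a <= t <= b -> is_derive h t (h' t)) ->
  (forall t, a <= t <= b -> 0 <= h' t) -> h a <= h b.
Proof.
  intros Hab Hd Hpos.
  destruct (MVT_gen h a b h') as [c [Hc Hmvt]].
  - intros t Ht. apply Hd. rewrite Rmin_left, Rmax_right in Ht; lra.
  - intros t Ht. apply continuity_pt_filterlim, (@ex_derive_continuous R_AbsRing R_NormedModule).
    exists (h' t). apply Hd. rewrite Rmin_left, Rmax_right in Ht; lra.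
  - rewrite Rmin_left, Rmax_right in Hc by lra. specialize (Hpos c Hc). nra.
Qed.

Lemma abs_change_le (h h' F F' : R -> R) (a b : R) : a <= b ->
  (forall t, a <= t <= b -> is_derive h t (h' t)) ->
  (forall t, a <= t <= b -> is_derive F t (F' t)) ->
  (forall t, a <= t <= b -> Rabs (h' t) <= F' t) ->
  Rabs (h b - h a) <= F b - F a.
Proof.
  intros Hab Hh HF Hbd.
  assert (Hup : F a - h a <= F b - h b).
  { apply (le_of_deriv_nonneg (fun t => F t - h t) (fun t => F' t - h' t)); auto.
    - intros t Ht. apply (is_derive_minus F h); auto.
    - intros t Ht. specialize (Hbd t Ht). pose proof (Rle_abs (h' t)). lra. }
  assert (Hdown : F a + h a <= F b + h b).
  { apply (le_of_deriv_nonneg (fun t => F t + h t) (fun t => F' t + h' t)); auto.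
    - intros t Ht. apply (is_derive_plus F h); auto.
    - intros t Ht. specialize (Hbd t Ht). pose proof (Rle_abs (- h' t)) as Hneg.
      rewrite Rabs_Ropp in Hneg. lra. }
  apply Rabs_le; lra.
Qed.

Lemma is_derive_mul_exp (h : R -> R) (dh a t : R) : is_derive h t dh ->
  is_derive (fun s => h s * exp (a * s)) t ((dh + a * h t) * exp (a * t)).
Proof.
  intros Hh.
  assert (He : is_derive (fun s => exp (a * s)) t (a * exp (a * t))).
  { auto_derive; [exact I | ring]. }
  assert (Hm := is_derive_mult h (fun s => exp (a * s)) t dh (a * exp (a * t)) Hh He
                  (fun x y => Rmult_comm x y)).
  replace ((dh + a * h t) * exp (a * t)) with (plus (scal dh (exp (a * t))) (scal (h t) (a * exp (a * t)))).
  - exact Hm.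
  - change (dh * exp (a * t) + h t * (a * exp (a * t)) = (dh + a * h t) * exp (a * t)). ring.
Qed.

Lemma is_derive_Rplus (g h : R -> R) (t dg dh : R) :
  is_derive g t dg -> is_derive h t dh -> is_derive (fun s => g s + h s) t (dg + dh).
Proof. intros; apply (is_derive_plus g h); auto. Qed.

Lemma is_derive_sq (g : R -> R) (t : R) : ex_derive g t ->
  is_derive (fun s => g s ^ 2) t (2 * g t * Derive g t).
Proof.
  intros H. assert (Hp := is_derive_pow g 2 t (Derive g t) (Derive_correct g t H)).
  replace (2 * g t * Derive g t) with (INR 2 * Derive g t * g t ^ (pred 2)) by (simpl; ring).
  exact Hp.
Qed.

Lemma is_derive_reflect (g : R -> R) (s d : R) :
  is_derive g (- s) d -> is_derive (fun t => g (- t)) s (- d).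
Proof.
  intros H. assert (Hn : is_derive (fun t : R => - t) s (-1)) by (auto_derive; [exact I|ring]).
  assert (Hc := is_derive_comp g (fun t => - t) s d (-1) H Hn).
  replace (- d) with (scal (-1) d) by (change (-1 * d = - d); ring). exact Hc.
Qed.

Lemma exp_monotone (a b : R) : a <= b -> exp a <= exp b.
Proof. intros [H|H]; [left; apply exp_increasing, H|rewrite H; lra]. Qed.

Lemma is_derive_sum_sq (F : nat -> R -> R) (t : R) (m : nat) :
  (forall j, (j <= m)%nat -> ex_derive (F j) t) ->
  is_derive (fun s => sum_f_R0 (fun j => F j s ^ 2) m) t
            (2 * sum_f_R0 (fun j => F j t * Derive (F j) t) m).
Proof.
  induction m as [|m IH]; intros Hd; cbn [sum_f_R0].
  - replace (2 * (F 0%nat t * Derive (F 0%nat) t)) with (2 * F 0%nat t * Derive (F 0%nat) t) by ring.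
    apply is_derive_sq, Hd; lia.
  - rewrite Rmult_plus_distr_l, <- Rmult_assoc.
    apply is_derive_Rplus; [apply IH; intros; apply Hd; lia|apply is_derive_sq, Hd; lia].
Qed.

Lemma continuous_Rplus (g h : R -> R) (t : R) :
  continuous g t -> continuous h t -> continuous (fun s => g s + h s) t.
Proof. intros; apply (continuous_plus g h); auto. Qed.

Lemma continuous_Rmult (g h : R -> R) (t : R) :
  continuous g t -> continuous h t -> continuous (fun s => g s * h s) t.
Proof. intros; apply (continuous_mult g h); auto. Qed.

Lemma continuous_Rminus (g h : R -> R) (t : R) :
  continuous g t -> continuous h t -> continuous (fun s => g s - h s) t.
Proof. intros; apply (continuous_minus g h); auto. Qed.

Lemma continuous_Rsqr (g : R -> R) (t : R) : continuous g t -> continuous (fun s => g s ^ 2) t.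
Proof.
  intros Hg. apply (continuous_ext (fun s => g s * g s)).
  - intros s. simpl. ring.
  - now apply continuous_Rmult.
Qed.

Lemma continuous_sum (F : nat -> R -> R) (t : R) (m : nat) :
  (forall j, (j <= m)%nat -> continuous (F j) t) ->
  continuous (fun s => sum_f_R0 (fun j => F j s) m) t.
Proof.
  induction m as [|m IH]; intros HF; cbn [sum_f_R0]; [apply HF; lia|].
  apply continuous_Rplus; [apply IH; intros; apply HF|apply HF]; lia.
Qed.

Lemma locally_bounded (g : R -> R) (x0 : R) : continuous g x0 ->
  exists d, 0 < d /\ forall y, Rabs (y - x0) < d -> Rabs (g y) <= Rabs (g x0) + 1.
Proof.
  intros Hc.
  destruct (proj1 (filterlim_locally (F := locally x0) g (g x0)) Hc (mkposreal 1 Rlt_0_1)) as [d Hd].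
  exists d. split; [apply cond_pos|]. intros y Hy.
  assert (Hb : ball x0 d y) by exact Hy.
  specialize (Hd y Hb). change (Rabs (g y - g x0) < 1) in Hd.
  pose proof (Rabs_triang_inv (g y) (g x0)). lra.
Qed.

Lemma locally_bounded_family (F : nat -> R -> R) (x0 : R) (m : nat) :
  (forall j, (j <= m)%nat -> continuous (F j) x0) ->
  exists d B, 0 < d /\ 0 <= B /\
    forall j y, (j <= m)%nat -> Rabs (y - x0) < d -> Rabs (F j y) <= B.
Proof.
  induction m as [|m IH]; intros Hc.
  - destruct (locally_bounded (F 0%nat) x0 (Hc 0%nat (le_n _))) as [d [Hd H]].
    exists d, (Rabs (F 0%nat x0) + 1). pose proof (Rabs_pos (F 0%nat x0)).
    repeat split; [lra|lra|]. intros j y Hj Hy. replace j with 0%nat by lia. auto.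
  - destruct IH as [d [B [Hd [HB H]]]]; [intros; apply Hc; lia|].
    destruct (locally_bounded (F (S m)) x0 (Hc (S m) (le_n _))) as [e [He Hlast]].
    exists (Rmin d e), (Rmax B (Rabs (F (S m) x0) + 1)).
    split; [apply Rmin_pos; lra|]. split; [eapply Rle_trans; [apply HB|apply Rmax_l]|].
    intros j y Hj Hy. pose proof (Rmin_l d e). pose proof (Rmin_r d e).
    destruct (Nat.eq_dec j (S m)) as [->|Hne].
    + eapply Rle_trans; [|apply Rmax_r]. apply Hlast. lra.
    + eapply Rle_trans; [|apply Rmax_l]. apply H; lia || lra.
Qed.

Lemma locally_bounded_above2 (h : R -> R -> R) (x0 u0 : R) :
  continuous (fun p : R * R => h (fst p) (snd p)) (x0, u0) ->
  exists d, 0 < d /\ forall y w, Rabs (y - x0) < d -> Rabs (w - u0) < d -> h y w <= h x0 u0 + 1.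
Proof.
  intros Hc.
  destruct (proj1 (filterlim_locally (F := locally (x0, u0)) (fun p : R * R => h (fst p) (snd p)) (h x0 u0))
              Hc (mkposreal 1 Rlt_0_1)) as [d Hd].
  exists d. split; [apply cond_pos|]. intros y w Hy Hw.
  assert (Hb : ball (x0, u0) d (y, w)) by (split; assumption).
  specialize (Hd _ Hb). change (Rabs (h y w - h x0 u0) < 1) in Hd.
  pose proof (Rle_abs (h y w - h x0 u0)). lra.
Qed.

Lemma cauchy_seq_converges (w : nat -> R) :
  (forall eps, 0 < eps -> exists N, forall k m, (N <= k)%nat -> (N <= m)%nat ->
     Rabs (w k - w m) < eps) ->
  exists l : R, is_lim_seq w l.
Proof.
  intros H.
  destruct (proj2 (ex_lim_seq_cauchy_corr w)) as [l Hl]; [intros eps; apply H, cond_pos|].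
  now exists l.
Qed.

Lemma lim_seq_eventually (w : nat -> R) (l : R) : is_lim_seq w l ->
  forall eps, 0 < eps -> exists N, forall k, (N <= k)%nat -> Rabs (w k - l) < eps.
Proof.
  intros H eps He. apply is_lim_seq_spec in H.
  destruct (H (mkposreal eps He)) as [N HN]. now exists N.
Qed.

Lemma eventually_forall_le (P : nat -> nat -> Prop) (m : nat) :
  (forall j, (j <= m)%nat -> exists N, forall k, (N <= k)%nat -> P j k) ->
  exists N, forall j k, (j <= m)%nat -> (N <= k)%nat -> P j k.
Proof.
  induction m as [|m IH]; intros H.
  - destruct (H 0%nat (le_n 0)) as [N HN]. exists N. intros j k Hj Hk.
    replace j with 0%nat by lia. auto.
  - destruct IH as [N1 H1]; [intros; apply H; lia|].
    destruct (H (S m) (le_n _)) as [N2 H2]. exists (max N1 N2). intros j k Hj Hk.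
    destruct (Nat.eq_dec j (S m)) as [->|]; [apply H2|apply H1]; lia.
Qed.

Lemma sum_sq_nonneg (a : nat -> R) (m : nat) : 0 <= sum_f_R0 (fun j => a j ^ 2) m.
Proof. apply cond_pos_sum. intros; apply pow2_ge_0. Qed.

Lemma sq_le_sum_sq (a : nat -> R) (j m : nat) : (j <= m)%nat ->
  a j ^ 2 <= sum_f_R0 (fun i => a i ^ 2) m.
Proof.
  induction m as [|m IH]; intros H; cbn [sum_f_R0].
  - replace j with 0%nat by lia. lra.
  - pose proof (sum_sq_nonneg a m). pose proof (pow2_ge_0 (a (S m))).
    destruct (Nat.eq_dec j (S m)) as [->|]; [lra|]. specialize (IH ltac:(lia)). lra.
Qed.

Lemma abs_le_sqrt (a S : R) : a ^ 2 <= S -> Rabs a <= sqrt S.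
Proof.
  intros H. rewrite <- (sqrt_pow2 (Rabs a)) by apply Rabs_pos.
  apply sqrt_le_1_alt. now rewrite pow2_abs.
Qed.

Lemma sum_telescope (a : nat -> R) (m : nat) :
  sum_f_R0 (fun j => a j - a (S j)) m = a 0%nat - a (S m).
Proof. induction m as [|m IH]; cbn [sum_f_R0]; [|rewrite IH]; ring. Qed.

(* The inductive step of Cauchy-Schwarz: S^2 <= AB implies 2Sxy <= Ay^2 + x^2 B. *)
Lemma cross_term_le (S A B x y : R) : 0 <= A -> 0 <= B -> S ^ 2 <= A * B ->
  2 * S * x * y <= A * y ^ 2 + x ^ 2 * B.
Proof.
  intros HA HB HS.
  assert (Hsq : (2 * S * x * y) ^ 2 <= (A * y ^ 2 + x ^ 2 * B) ^ 2).
  { assert (0 <= (A * y ^ 2 - x ^ 2 * B) ^ 2) by apply pow2_ge_0.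
    assert (0 <= x ^ 2 * y ^ 2) by nra.
    assert (S ^ 2 * (x ^ 2 * y ^ 2) <= A * B * (x ^ 2 * y ^ 2)) by (apply Rmult_le_compat_r; lra).
    nra. }
  assert (0 <= A * y ^ 2 + x ^ 2 * B) by nra.
  destruct (Rle_dec (2 * S * x * y) 0); [lra|nra].
Qed.

Lemma cauchy_schwarz_sum (a b : nat -> R) (m : nat) :
  Rabs (sum_f_R0 (fun j => a j * b j) m) <=
  sqrt (sum_f_R0 (fun j => a j ^ 2) m) * sqrt (sum_f_R0 (fun j => b j ^ 2) m).
Proof.
  rewrite <- sqrt_mult by apply sum_sq_nonneg. apply abs_le_sqrt.
  induction m as [|m IH]; cbn [sum_f_R0]; [apply Req_le; ring|].
  pose proof (cross_term_le _ _ _ (a (S m)) (b (S m))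
                (sum_sq_nonneg a m) (sum_sq_nonneg b m) IH).
  nra.
Qed.

Lemma smooth2_continuous (eta : R -> R -> R) : smooth2 eta ->
  forall x u, continuous (fun p : R * R => eta (fst p) (snd p)) (x, u).
Proof.
  intros [D [H0 [_ [_ Hc]]]] x u.
  apply (continuous_ext (fun p : R * R => D 0%nat 0%nat (fst p) (snd p))); [intros; apply H0|apply Hc].
Qed.

Lemma smooth2_u_derivatives (eta : R -> R -> R) : smooth2 eta ->
  forall x u, is_derive (fun w => eta x w) u (eta_u eta x u) /\
              is_derive (fun w => eta_u eta x w) u (eta_uu eta x u).
Proof.
  intros [D [H0 [_ [Hu _]]]] x u.
  assert (H1 : forall w, is_derive (fun w => eta x w) w (D 0%nat 1%nat x w)).
  { intros w. apply (is_derive_ext (fun w => D 0%nat 0%nat x w)); [intros; apply H0|apply Hu]. }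
  assert (E1 : forall w, eta_u eta x w = D 0%nat 1%nat x w).
  { intros w. apply is_derive_unique, H1. }
  assert (H2 : is_derive (fun w => eta_u eta x w) u (D 0%nat 2%nat x u)).
  { apply (is_derive_ext (D 0%nat 1%nat x)); [intros; symmetry; apply E1|apply Hu]. }
  split.
  - rewrite E1. apply H1.
  - replace (eta_uu eta x u) with (D 0%nat 2%nat x u); [exact H2|].
    symmetry. apply is_derive_unique, H2.
Qed.

Lemma fext_continuous (n : nat) (f : nat -> R -> R) :
  (forall j, (1 <= j)%nat -> (j <= n)%nat -> smooth1 (f j)) ->
  forall j x, continuous (fext n f j) x.
Proof.
  intros Hf j x. unfold fext.
  destruct (Nat.leb 1 j) eqn:E1; destruct (Nat.leb j n) eqn:E2; try apply continuous_const.
  apply Nat.leb_le in E1, E2.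
  apply (@ex_derive_continuous R_AbsRing R_NormedModule), (Hf j E1 E2 1%nat x).
Qed.

Lemma fext_above (n : nat) (f : nat -> R -> R) (j : nat) (x : R) :
  (n < j)%nat -> fext n f j x = 0.
Proof.
  intros H. unfold fext. replace (Nat.leb j n) with false by (symmetry; now apply Nat.leb_gt).
  now destruct (Nat.leb 1 j).
Qed.

Lemma fext_locally_bounded (n : nat) (f : nat -> R -> R) (x0 : R) :
  (forall j x, continuous (fext n f j) x) ->
  exists d B, 0 < d /\ 0 <= B /\ forall j y, Rabs (y - x0) < d -> Rabs (fext n f j y) <= B.
Proof.
  intros Hc. destruct (locally_bounded_family (fext n f) x0 n) as [d [B [Hd [HB H]]]]; auto.
  exists d, B. repeat split; auto. intros j y Hy.
  destruct (Nat.le_gt_cases j n); [auto|]. rewrite fext_above, Rabs_R0 by lia. exact HB.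
Qed.

(** * Lower bound on the warping function *)

(* ODE comparison on a half-line: if g'' >= k^2 g, g(0) = 1 and g'(0) = -k,
   then g(u) >= exp (-k u) for u >= 0.  With phi = g' + k g one has
   (phi e^{-ku})' = (g'' - k^2 g) e^{-ku} >= 0 and (g e^{ku})' = phi e^{ku}. *)
Lemma exp_le_of_ode_nonneg (g g1 g2 : R -> R) (k : R) :
  (forall u, is_derive g u (g1 u)) -> (forall u, is_derive g1 u (g2 u)) ->
  g 0 = 1 -> g1 0 = - k -> (forall u, k ^ 2 * g u <= g2 u) ->
  forall u, 0 <= u -> exp (- k * u) <= g u.
Proof.
  intros Hg Hg1 H0 H1 Hk u Hu.
  set (phi := fun s => g1 s + k * g s).
  assert (Hphi : forall s, is_derive phi s (g2 s + k * g1 s)).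
  { intros s. apply (is_derive_plus g1 (fun s => k * g s)); [apply Hg1|apply is_derive_scal, Hg]. }
  assert (Hphi_nonneg : forall s, 0 <= s -> 0 <= phi s).
  { intros s Hs.
    assert (Hphi0 : phi 0 = 0) by (unfold phi; rewrite H0, H1; ring).
    assert (Hm : phi 0 * exp (- k * 0) <= phi s * exp (- k * s)).
    { apply (le_of_deriv_nonneg (fun t => phi t * exp (- k * t))
               (fun t => (g2 t + k * g1 t + - k * phi t) * exp (- k * t))); auto.
      - intros t _. apply is_derive_mul_exp, Hphi.
      - intros t _. apply Rmult_le_pos; [unfold phi; specialize (Hk t); nra|left; apply exp_pos]. }
    rewrite Hphi0, Rmult_0_l in Hm. pose proof (exp_pos (- k * s)). nra. }
  assert (Hgrow : 1 <= g u * exp (k * u)).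
  { assert (Hm : g 0 * exp (k * 0) <= g u * exp (k * u)).
    { apply (le_of_deriv_nonneg (fun t => g t * exp (k * t))
               (fun t => (g1 t + k * g t) * exp (k * t))); auto.
      - intros t _. apply is_derive_mul_exp, Hg.
      - intros t Ht. apply Rmult_le_pos; [apply Hphi_nonneg; lra|left; apply exp_pos]. }
    rewrite H0, Rmult_0_r, exp_0, Rmult_1_l in Hm. exact Hm. }
  assert (E : exp (- k * u) * exp (k * u) = 1).
  { rewrite <- exp_plus. replace (- k * u + k * u) with 0 by ring. apply exp_0. }
  pose proof (exp_pos (k * u)). pose proof (exp_pos (- k * u)).
  apply (Rmult_le_reg_r (exp (k * u))); lra.
Qed.

(* The same comparison on the whole line, by reflecting u to -u and k to -k. *)
Lemma exp_le_of_ode (g g1 g2 : R -> R) (k : R) :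
  (forall u, is_derive g u (g1 u)) -> (forall u, is_derive g1 u (g2 u)) ->
  g 0 = 1 -> g1 0 = - k -> (forall u, k ^ 2 * g u <= g2 u) ->
  forall u, exp (- k * u) <= g u.
Proof.
  intros Hg Hg1 H0 H1 Hk u. destruct (Rle_dec 0 u); [apply (exp_le_of_ode_nonneg g g1 g2); auto|].
  replace (- k * u) with (- - k * - u) by ring. rewrite <- (Ropp_involutive u) at 2.
  apply (exp_le_of_ode_nonneg (fun s => g (- s)) (fun s => - g1 (- s)) (fun s => g2 (- s)) (- k));
    try lra.
  - intros s. apply is_derive_reflect, Hg.
  - intros s. replace (g2 (- s)) with (- - g2 (- s)) by ring.
    apply (is_derive_opp (fun t => g1 (- t))), is_derive_reflect, Hg1.
  - now rewrite Ropp_0.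
  - rewrite Ropp_0, H1. ring.
  - intros s. replace ((- k) ^ 2) with (k ^ 2) by ring. apply Hk.
Qed.

(* The curvature hypotheses say that g = eta(x, .) satisfies g'' >= k_gamma(x)^2 g,
   since Scal = -2 g''/g. *)
Lemma curvature_ode_ineq (eta : R -> R -> R) (x w : R) : 0 < eta x w -> Scal eta x w < 0 ->
  Rabs (k_gamma eta x) <= sqrt (1 / 2 * Rabs (Scal eta x w)) ->
  k_gamma eta x ^ 2 * eta x w <= eta_uu eta x w.
Proof.
  intros Hpos HS Hk. unfold Scal in *. rewrite (Rabs_left (- 2 * _ / _)) in Hk by lra.
  assert (E : 1 / 2 * - (- 2 * eta_uu eta x w / eta x w) = eta_uu eta x w / eta x w) by (field; lra).
  rewrite E in Hk.
  assert (Hk2 : k_gamma eta x ^ 2 <= eta_uu eta x w / eta x w).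
  { rewrite <- pow2_abs, <- (pow2_sqrt (eta_uu eta x w / eta x w)) by (rewrite <- E; lra).
    apply pow_incr. split; [apply Rabs_pos|exact Hk]. }
  apply (Rmult_le_compat_r (eta x w)) in Hk2; [|lra].
  replace (eta_uu eta x w / eta x w * eta x w) with (eta_uu eta x w) in Hk2 by (field; lra). lra.
Qed.

Lemma eta_lower_bound (eta : R -> R -> R) (Lam : R) : smooth2 eta ->
  (forall x u, 0 < eta x u) ->
  (forall x, eta x 0 = 1) ->
  (forall x u, Scal eta x u < 0) ->
  (forall x u, Rabs (k_gamma eta x) <= sqrt (1 / 2 * Rabs (Scal eta x u))) ->
  (forall x, Rabs (k_gamma eta x) <= Lam) ->
  forall x u, exp (- Lam * Rabs u) <= eta x u.
Proof.
  intros Hs Hpos H1 HS Hk HL x u.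
  set (k := k_gamma eta x).
  assert (Hode : forall w, k ^ 2 * eta x w <= eta_uu eta x w)
    by (intros w; apply curvature_ode_ineq; auto).
  assert (Hexp : exp (- k * u) <= eta x u).
  { apply (exp_le_of_ode (fun w => eta x w) (eta_u eta x) (eta_uu eta x) k); auto;
      try (intros w; apply (smooth2_u_derivatives eta Hs x w)).
    unfold k, k_gamma. ring. }
  eapply Rle_trans; [|exact Hexp]. apply exp_monotone.
  specialize (HL x). fold k in HL.
  pose proof (Rle_abs (k * u)) as Hku. rewrite Rabs_mult in Hku.
  pose proof (Rabs_pos u). assert (Rabs k * Rabs u <= Lam * Rabs u) by (apply Rmult_le_compat_r; auto).
  lra.
Qed.

(** * The metric along a curve *)

Definition bracket (n : nat) (v : nat -> R) : R := sqrt (1 + sum_f_R0 (fun j => v j ^ 2) n).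

Definition vpos (c : curve) (t : R) : nat -> R := fun j => cv c j t.

(* The coefficient of dx in the j-th square of (star). *)
Definition coupling (n : nat) (f : nat -> R -> R) (x : R) (v : nat -> R) (j : nat) : R :=
  v (j - 1)%nat * fext n f j x - v (S j) * fext n f (S j) x.

Definition vel (n : nat) (f : nat -> R -> R) (c : curve) (j : nat) (t : R) : R :=
  Derive (cv c j) t + coupling n f (cx c t) (vpos c t) j * Derive (cx c) t.

Definition speed (n : nat) (f : nat -> R -> R) (eta : R -> R -> R) (c : curve) (t : R) : R :=
  sqrt (speed2 n f eta c t).

Definition arclength (n : nat) (f : nat -> R -> R) (eta : R -> R -> R) (c : curve) (t : R) : R :=
  RInt (speed n f eta c) 0 t.

Lemma speed2_split (n : nat) (f : nat -> R -> R) (eta : R -> R -> R) (c : curve) (t : R) :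
  speed2 n f eta c t = (eta (cx c t) (cv c 0%nat t) * Derive (cx c) t) ^ 2
                       + sum_f_R0 (fun j => vel n f c j t ^ 2) n.
Proof. unfold speed2. f_equal. ring. Qed.

Lemma bracket_ge_1 (n : nat) (v : nat -> R) : 1 <= bracket n v.
Proof.
  pose proof (sum_sq_nonneg v n). rewrite <- sqrt_1. apply sqrt_le_1_alt. lra.
Qed.

Lemma abs_le_bracket (n : nat) (v : nat -> R) (i : nat) : (i <= n)%nat -> Rabs (v i) <= bracket n v.
Proof. intros H. apply abs_le_sqrt. pose proof (sq_le_sum_sq v i n H). lra. Qed.

(* The coupling terms form an infinitesimal rotation: sum_j v_j coupling_j = 0,
   since the sum telescopes and f_0 = f_{n+1} = 0. *)
Lemma coupling_skew (n : nat) (f : nat -> R -> R) (x : R) (v : nat -> R) :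
  sum_f_R0 (fun j => v j * coupling n f x v j) n = 0.
Proof.
  set (a := fun j => v j * v (j - 1)%nat * fext n f j x).
  rewrite (sum_eq _ (fun j => a j - a (S j))).
  - rewrite sum_telescope. unfold a. rewrite (fext_above n f (S n)) by lia.
    change (fext n f 0 x) with 0. ring.
  - intros i _. unfold a, coupling. replace (S i - 1)%nat with i by lia. ring.
Qed.

Lemma coupling_bound (n : nat) (f : nat -> R -> R) (x : R) (v : nat -> R) (j : nat) (M B : R) :
  (j <= n)%nat -> 0 <= M -> (forall i, (i <= n)%nat -> Rabs (v i) <= M) ->
  (forall i, Rabs (fext n f i x) <= B) -> Rabs (coupling n f x v j) <= 2 * M * B.
Proof.
  intros Hj HM Hv HB. unfold coupling.
  assert (HB0 : 0 <= B) by (eapply Rle_trans; [apply Rabs_pos|apply (HB 0%nat)]).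
  assert (Hlow : Rabs (v (j - 1)%nat * fext n f j x) <= M * B).
  { rewrite Rabs_mult. apply Rmult_le_compat; try apply Rabs_pos; auto. apply Hv; lia. }
  assert (Hup : Rabs (v (S j) * fext n f (S j) x) <= M * B).
  { destruct (Nat.le_gt_cases (S j) n).
    - rewrite Rabs_mult. apply Rmult_le_compat; try apply Rabs_pos; auto.
    - rewrite fext_above, Rmult_0_r, Rabs_R0 by lia. nra. }
  eapply Rle_trans; [apply Rabs_triang|]. rewrite Rabs_Ropp. lra.
Qed.

Lemma horizontal_le_speed (n : nat) (f : nat -> R -> R) (eta : R -> R -> R) (c : curve) (t : R) :
  Rabs (eta (cx c t) (cv c 0%nat t) * Derive (cx c) t) <= speed n f eta c t.
Proof.
  apply abs_le_sqrt. rewrite speed2_split.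
  pose proof (sum_sq_nonneg (fun j => vel n f c j t) n). lra.
Qed.

Lemma abscissa_rate_le (n : nat) (f : nat -> R -> R) (eta : R -> R -> R) (c : curve) (t C : R) :
  0 <= C <= eta (cx c t) (cv c 0%nat t) -> C * Rabs (Derive (cx c) t) <= speed n f eta c t.
Proof.
  intros HC. eapply Rle_trans; [|apply horizontal_le_speed].
  rewrite Rabs_mult, (Rabs_right (eta _ _)) by lra.
  apply Rmult_le_compat_r; [apply Rabs_pos|lra].
Qed.

Lemma vel_le_speed (n : nat) (f : nat -> R -> R) (eta : R -> R -> R) (c : curve) (j : nat) (t : R) :
  (j <= n)%nat -> Rabs (vel n f c j t) <= speed n f eta c t.
Proof.
  intros Hj. apply abs_le_sqrt. rewrite speed2_split.
  pose proof (sq_le_sum_sq (fun j => vel n f c j t) j n Hj).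
  pose proof (pow2_ge_0 (eta (cx c t) (cv c 0%nat t) * Derive (cx c) t)). lra.
Qed.

Lemma bracket_derive (n : nat) (c : curve) (t : R) :
  (forall j, (j <= n)%nat -> ex_derive (cv c j) t) ->
  is_derive (fun s => bracket n (vpos c s)) t
    (sum_f_R0 (fun j => cv c j t * Derive (cv c j) t) n / bracket n (vpos c t)).
Proof.
  intros Hd. pose proof (bracket_ge_1 n (vpos c t)) as H1.
  pose proof (sum_sq_nonneg (fun j => cv c j t) n). unfold bracket, vpos in *.
  replace (sum_f_R0 (fun j => cv c j t * Derive (cv c j) t) n / sqrt (1 + sum_f_R0 (fun j => cv c j t ^ 2) n))
    with ((0 + 2 * sum_f_R0 (fun j => cv c j t * Derive (cv c j) t) n)
            / (2 * sqrt (1 + sum_f_R0 (fun j => cv c j t ^ 2) n))) by (field; lra).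
  apply (is_derive_sqrt (fun s => 1 + sum_f_R0 (fun j => cv c j s ^ 2) n)); [|lra].
  apply is_derive_Rplus; [apply (is_derive_const 1 t)|apply (is_derive_sum_sq (fun j => cv c j)); auto].
Qed.

(* The rotation invariance: |d<v>/dt| <= speed, via coupling_skew and Cauchy-Schwarz. *)
Lemma bracket_derive_le_speed (n : nat) (f : nat -> R -> R) (eta : R -> R -> R) (c : curve) (t : R) :
  Rabs (sum_f_R0 (fun j => cv c j t * Derive (cv c j) t) n / bracket n (vpos c t))
  <= speed n f eta c t.
Proof.
  assert (Hrot : sum_f_R0 (fun j => cv c j t * Derive (cv c j) t) n =
                 sum_f_R0 (fun j => cv c j t * vel n f c j t) n).
  { rewrite (sum_eq _ (fun j => cv c j t * vel n f c j t
                   - cv c j t * coupling n f (cx c t) (vpos c t) j * Derive (cx c) t))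
      by (intros; unfold vel; ring).
    rewrite minus_sum, <- scal_sum.
    assert (Hs := coupling_skew n f (cx c t) (vpos c t)). unfold vpos at 1 in Hs.
    rewrite Hs. ring. }
  assert (Hcs := cauchy_schwarz_sum (fun j => cv c j t) (fun j => vel n f c j t) n).
  assert (Hv : sqrt (sum_f_R0 (fun j => cv c j t ^ 2) n) <= bracket n (vpos c t)).
  { unfold bracket, vpos. apply sqrt_le_1_alt. lra. }
  assert (Hw : sqrt (sum_f_R0 (fun j => vel n f c j t ^ 2) n) <= speed n f eta c t).
  { apply sqrt_le_1_alt. rewrite speed2_split. pose proof (pow2_ge_0 (eta (cx c t) (cv c 0%nat t) * Derive (cx c) t)). lra. }
  pose proof (bracket_ge_1 n (vpos c t)).
  unfold Rdiv. rewrite Rabs_mult, Rabs_inv, (Rabs_right (bracket _ _)) by lra.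
  apply (Rmult_le_reg_r (bracket n (vpos c t))); [lra|].
  rewrite Rmult_assoc, Rinv_l, Rmult_1_r, Hrot by lra.
  eapply Rle_trans; [exact Hcs|].
  rewrite Rmult_comm. apply Rmult_le_compat; auto using sqrt_pos.
Qed.

Lemma speed_le (n : nat) (f : nat -> R -> R) (eta : R -> R -> R) (c : curve) (t e H M B : R) :
  0 <= e -> 0 <= M -> 0 <= eta (cx c t) (cv c 0%nat t) <= H ->
  Rabs (Derive (cx c) t) <= e -> (forall j, (j <= n)%nat -> Rabs (Derive (cv c j) t) <= e) ->
  (forall i, (i <= n)%nat -> Rabs (cv c i t) <= M) -> (forall i, Rabs (fext n f i (cx c t)) <= B) ->
  speed n f eta c t <= sqrt (H ^ 2 + INR (S n) * (1 + 2 * M * B) ^ 2) * e.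
Proof.
  intros He HM Heta Hx Hv Hpos HB.
  assert (HB0 : 0 <= B) by (eapply Rle_trans; [apply Rabs_pos|apply (HB 0%nat)]).
  unfold speed. rewrite <- (sqrt_pow2 e), <- sqrt_mult by
    (auto; try apply pow2_ge_0; pose proof (pos_INR (S n)); pose proof (pow2_ge_0 H);
     pose proof (pow2_ge_0 (1 + 2 * M * B)); nra).
  apply sqrt_le_1_alt. rewrite speed2_split.
  assert (Hhor : (eta (cx c t) (cv c 0%nat t) * Derive (cx c) t) ^ 2 <= H ^ 2 * e ^ 2).
  { rewrite <- Rpow_mult_distr, <- pow2_abs, Rabs_mult, Rabs_right by lra.
    apply pow_incr. split; [pose proof (Rabs_pos (Derive (cx c) t)); nra|].
    apply Rmult_le_compat; try lra; apply Rabs_pos. }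
  assert (Hvert : sum_f_R0 (fun j => vel n f c j t ^ 2) n <= INR (S n) * ((1 + 2 * M * B) ^ 2 * e ^ 2)).
  { rewrite Rmult_comm, <- sum_cte. apply sum_Rle. intros j Hj.
    rewrite <- pow2_abs, <- Rpow_mult_distr. apply pow_incr. split; [apply Rabs_pos|].
    unfold vel. eapply Rle_trans; [apply Rabs_triang|]. rewrite Rabs_mult.
    pose proof (coupling_bound n f (cx c t) (vpos c t) j M B Hj HM Hpos HB).
    assert (Rabs (coupling n f (cx c t) (vpos c t) j) * Rabs (Derive (cx c) t) <= 2 * M * B * e)
      by (apply Rmult_le_compat; auto; apply Rabs_pos).
    specialize (Hv j Hj). lra. }
  lra.
Qed.

Section AlongCurve.

Variables (n : nat) (f : nat -> R -> R) (eta : R -> R -> R) (c : curve).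
Hypothesis Hadm : admissible n c.
Hypothesis Hfc : forall j x, continuous (fext n f j) x.
Hypothesis Hec : forall x u, continuous (fun p : R * R => eta (fst p) (snd p)) (x, u).

Lemma coupling_continuous (j : nat) (t : R) : (j <= n)%nat ->
  continuous (fun s => coupling n f (cx c s) (vpos c s) j) t.
Proof.
  intros Hj. destruct Hadm as [[Hx _] Hv].
  assert (Hcv : forall i, (i <= n)%nat -> continuous (cv c i) t)
    by (intros i Hi; apply (@ex_derive_continuous R_AbsRing R_NormedModule), (Hv i Hi)).
  assert (Hfx : forall i, continuous (fun s => fext n f i (cx c s)) t).
  { intros i. apply (continuous_comp (cx c) (fext n f i)); [|apply Hfc].
    apply (@ex_derive_continuous R_AbsRing R_NormedModule), Hx. }
  unfold coupling, vpos. apply continuous_Rminus; [apply continuous_Rmult; auto; apply Hcv; lia|].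
  destruct (Nat.le_gt_cases (S j) n); [apply continuous_Rmult; auto|].
  apply (continuous_ext (fun _ => 0)); [|apply continuous_const].
  intros s. rewrite fext_above by lia. symmetry. apply Rmult_0_r.
Qed.

Lemma speed_continuous (t : R) : continuous (speed n f eta c) t.
Proof.
  pose proof Hadm as [[Hx Hx'] Hv].
  assert (Hcx : continuous (cx c) t) by apply (@ex_derive_continuous R_AbsRing R_NormedModule), Hx.
  assert (Hcu : continuous (cv c 0%nat) t)
    by (apply (@ex_derive_continuous R_AbsRing R_NormedModule), (Hv 0%nat ltac:(lia))).
  apply continuous_sqrt_comp.
  apply (continuous_ext (fun s => (eta (cx c s) (cv c 0%nat s) * Derive (cx c) s) ^ 2
                                   + sum_f_R0 (fun j => vel n f c j s ^ 2) n));
    [intros; symmetry; apply speed2_split|].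
  apply continuous_Rplus; apply continuous_Rsqr || apply continuous_sum.
  - apply continuous_Rmult; [|apply Hx'].
    apply (continuous_comp_2 (cx c) (cv c 0%nat) eta); auto.
  - intros j Hj. apply continuous_Rsqr. unfold vel.
    apply continuous_Rplus; [apply (proj2 (Hv j Hj))|].
    apply continuous_Rmult; [apply coupling_continuous; auto|apply Hx'].
Qed.

Lemma ex_RInt_speed (a b : R) : ex_RInt (speed n f eta c) a b.
Proof. apply (@ex_RInt_continuous R_CompleteNormedModule). intros; apply speed_continuous. Qed.

Lemma arclength_derive (t : R) : is_derive (arclength n f eta c) t (speed n f eta c t).
Proof.
  apply (is_derive_RInt (speed n f eta c) _ 0); [|apply speed_continuous].
  apply filter_forall. intros b. apply (@RInt_correct R_CompleteNormedModule), ex_RInt_speed.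
Qed.

Lemma arclength_0 : arclength n f eta c 0 = 0.
Proof. unfold arclength. rewrite RInt_point. reflexivity. Qed.

Lemma arclength_1 : arclength n f eta c 1 = curve_length n f eta c.
Proof. reflexivity. Qed.

Lemma arclength_bounds (t : R) : 0 <= t <= 1 ->
  0 <= arclength n f eta c t <= curve_length n f eta c.
Proof.
  intros Ht. unfold arclength, curve_length. fold (speed n f eta c).
  rewrite <- (RInt_Chasles (speed n f eta c) 0 t 1) by apply ex_RInt_speed.
  assert (0 <= RInt (speed n f eta c) 0 t) by (apply RInt_ge_0; [lra|apply ex_RInt_speed|intros; apply sqrt_pos]).
  assert (0 <= RInt (speed n f eta c) t 1) by (apply RInt_ge_0; [lra|apply ex_RInt_speed|intros; apply sqrt_pos]).
  change (plus ?a ?b) with (a + b). lra.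
Qed.

Lemma bracket_lipschitz (t : R) : 0 <= t ->
  Rabs (bracket n (vpos c t) - bracket n (vpos c 0)) <= arclength n f eta c t.
Proof.
  intros Ht.
  replace (arclength n f eta c t) with (arclength n f eta c t - arclength n f eta c 0)
    by (rewrite arclength_0; ring).
  apply (abs_change_le (fun s => bracket n (vpos c s)) (fun s => sum_f_R0 (fun j => cv c j s * Derive (cv c j) s) n / bracket n (vpos c s))
           _ (speed n f eta c)); auto.
  - intros s _. apply bracket_derive. intros j Hj. apply (proj2 Hadm j Hj).
  - intros s _. apply arclength_derive.
  - intros s _. apply bracket_derive_le_speed.
Qed.

Lemma abscissa_lipschitz (C t : R) : 0 < C ->
  (forall s, 0 <= s <= t -> C <= eta (cx c s) (cv c 0%nat s)) -> 0 <= t ->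
  C * Rabs (cx c t - cx c 0) <= arclength n f eta c t.
Proof.
  intros HC Heta Ht.
  rewrite <- (Rabs_right C) at 1 by lra. rewrite <- Rabs_mult, Rmult_minus_distr_l.
  replace (arclength n f eta c t) with (arclength n f eta c t - arclength n f eta c 0)
    by (rewrite arclength_0; ring).
  apply (abs_change_le (fun s => C * cx c s) (fun s => C * Derive (cx c) s) _ (speed n f eta c)); auto.
  - intros s _. apply is_derive_scal, Derive_correct, (proj1 (proj1 Hadm)).
  - intros s _. apply arclength_derive.
  - intros s Hs. rewrite Rabs_mult, (Rabs_right C) by lra.
    apply abscissa_rate_le. specialize (Heta s Hs). lra.
Qed.

Lemma vertical_lipschitz (C M B t : R) (j : nat) : 0 < C -> 0 <= M -> 0 <= B -> (j <= n)%nat ->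
  (forall s, 0 <= s <= t -> C <= eta (cx c s) (cv c 0%nat s)) ->
  (forall s i, 0 <= s <= t -> (i <= n)%nat -> Rabs (cv c i s) <= M) ->
  (forall s i, 0 <= s <= t -> Rabs (fext n f i (cx c s)) <= B) -> 0 <= t ->
  Rabs (cv c j t - cv c j 0) <= (1 + 2 * M * B / C) * arclength n f eta c t.
Proof.
  intros HC HM HB Hj Heta Hpos Hf Ht. set (K := 1 + 2 * M * B / C).
  replace (K * arclength n f eta c t) with (K * arclength n f eta c t - K * arclength n f eta c 0)
    by (rewrite arclength_0; ring).
  apply (abs_change_le (cv c j) (Derive (cv c j)) (fun s => K * arclength n f eta c s)
           (fun s => K * speed n f eta c s)); auto.
  - intros s _. apply Derive_correct, (proj2 Hadm j Hj).
  - intros s _. apply is_derive_scal, arclength_derive.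
  - intros s Hs.
    assert (Hx : C * Rabs (Derive (cx c) s) <= speed n f eta c s)
      by (apply abscissa_rate_le; specialize (Heta s Hs); lra).
    assert (Hcpl : Rabs (coupling n f (cx c s) (vpos c s) j) <= 2 * M * B).
    { apply coupling_bound; auto. intros i Hi. apply Hpos; auto. }
    assert (Hprod : Rabs (coupling n f (cx c s) (vpos c s) j) * Rabs (Derive (cx c) s)
                    <= 2 * M * B * (speed n f eta c s / C)).
    { apply Rmult_le_compat; try apply Rabs_pos; auto.
      apply (Rmult_le_reg_l C); [lra|]. replace (C * (speed n f eta c s / C)) with (speed n f eta c s) by (field; lra).
      exact Hx. }
    replace (Derive (cv c j) s) with (vel n f c j s - coupling n f (cx c s) (vpos c s) j * Derive (cx c) s)
      by (unfold vel; ring).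
    eapply Rle_trans; [apply Rabs_triang|]. rewrite Rabs_Ropp, Rabs_mult.
    pose proof (vel_le_speed n f eta c j s Hj).
    replace (K * speed n f eta c s) with (speed n f eta c s + 2 * M * B * (speed n f eta c s / C))
      by (unfold K; field; lra).
    lra.
Qed.

End AlongCurve.

Lemma bracket_joins (n : nat) (c : curve) (p q : point) : joins n c p q ->
  bracket n (vpos c 0) = bracket n (snd p) /\ bracket n (vpos c 1) = bracket n (snd q).
Proof.
  intros [_ [_ H]]. unfold bracket, vpos.
  split; do 2 f_equal; apply sum_eq; intros i Hi; destruct (H i Hi) as [E0 E1]; rewrite ?E0, ?E1; reflexivity.
Qed.

Lemma bracket_along_curve (n : nat) (f : nat -> R -> R) (eta : R -> R -> R) (c : curve) (p q : point) (t : R) :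
  admissible n c -> (forall j x, continuous (fext n f j) x) ->
  (forall x u, continuous (fun p : R * R => eta (fst p) (snd p)) (x, u)) ->
  joins n c p q -> 0 <= t <= 1 ->
  bracket n (vpos c t) <= bracket n (snd p) + curve_length n f eta c.
Proof.
  intros Ha Hf He Hj Ht. destruct (bracket_joins n c p q Hj) as [E0 _].
  pose proof (bracket_lipschitz n f eta c Ha Hf He t ltac:(lra)).
  pose proof (arclength_bounds n f eta c Ha Hf He t Ht).
  pose proof (Rle_abs (bracket n (vpos c t) - bracket n (vpos c 0))). lra.
Qed.

(** * Cauchy sequences converge coordinatewise *)

Definition dist_cauchy (n : nat) (f : nat -> R -> R) (eta : R -> R -> R) (s : nat -> point) : Prop :=
  forall eps, 0 < eps -> exists N : nat, forall k m : nat, (N <= k)%nat -> (N <= m)%nat ->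
    dist_lt n f eta (s k) (s m) eps.

Definition coord_lim (n : nat) (s : nat -> point) (p : point) : Prop :=
  is_lim_seq (fun k => fst (s k)) (fst p) /\
  forall j, (j <= n)%nat -> is_lim_seq (fun k => snd (s k) j) (snd p j).

Section CauchyCoordinates.

Variables (n : nat) (f : nat -> R -> R) (eta : R -> R -> R) (Lam : R) (s : nat -> point).
Hypothesis Hfc : forall j x, continuous (fext n f j) x.
Hypothesis Hec : forall x u, continuous (fun p : R * R => eta (fst p) (snd p)) (x, u).
Hypothesis HLam : 0 <= Lam.
Hypothesis Hlow : forall x u, exp (- Lam * Rabs u) <= eta x u.
Hypothesis Hcauchy : dist_cauchy n f eta s.

Lemma tail_bracket_bounded : exists N0 M, forall k, (N0 <= k)%nat -> bracket n (snd (s k)) <= M.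
Proof.
  destruct (Hcauchy 1 Rlt_0_1) as [N0 HN0]. exists N0, (bracket n (snd (s N0)) + 1).
  intros k Hk. destruct (HN0 N0 k (le_n _) Hk) as [c [Ha [Hj Hlen]]].
  pose proof (bracket_along_curve n f eta c (s N0) (s k) 1 Ha Hfc Hec Hj ltac:(lra)) as Hend.
  rewrite (proj2 (bracket_joins n c _ _ Hj)) in Hend. lra.
Qed.

Variables (N0 : nat) (M : R).
Hypothesis HM : forall k, (N0 <= k)%nat -> bracket n (snd (s k)) <= M.

Lemma short_curve_region (c : curve) (k m : nat) : (N0 <= k)%nat ->
  admissible n c -> joins n c (s k) (s m) -> curve_length n f eta c < 1 ->
  forall t, 0 <= t <= 1 ->
    (forall i, (i <= n)%nat -> Rabs (cv c i t) <= M + 1) /\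
    exp (- Lam * (M + 1)) <= eta (cx c t) (cv c 0%nat t).
Proof.
  intros Hk Ha Hj Hlen t Ht.
  pose proof (bracket_along_curve n f eta c _ _ t Ha Hfc Hec Hj Ht). specialize (HM k Hk).
  assert (Hv : forall i, (i <= n)%nat -> Rabs (cv c i t) <= M + 1).
  { intros i Hi. pose proof (abs_le_bracket n (vpos c t) i Hi) as Hi'. unfold vpos at 1 in Hi'. lra. }
  split; [exact Hv|]. eapply Rle_trans; [|apply Hlow]. apply exp_monotone.
  specialize (Hv 0%nat ltac:(lia)). nra.
Qed.

Let C := exp (- Lam * (M + 1)).

Lemma short_curve_abscissa (c : curve) (k m : nat) : (N0 <= k)%nat ->
  admissible n c -> joins n c (s k) (s m) -> curve_length n f eta c < 1 ->
  forall t, 0 <= t <= 1 -> C * Rabs (cx c t - fst (s k)) <= curve_length n f eta c.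
Proof.
  intros Hk Ha Hj Hlen t Ht.
  pose proof (abscissa_lipschitz n f eta c Ha Hfc Hec C t (exp_pos _)
                (fun u Hu => proj2 (short_curve_region c k m Hk Ha Hj Hlen u ltac:(lra))) ltac:(lra)) as Hx.
  pose proof (arclength_bounds n f eta c Ha Hfc Hec t Ht).
  destruct Hj as [J0 _]. rewrite J0 in Hx. lra.
Qed.

Lemma short_curve_vertical (c : curve) (k m : nat) (B : R) (j : nat) : (N0 <= k)%nat ->
  admissible n c -> joins n c (s k) (s m) -> curve_length n f eta c < 1 -> 0 <= B -> (j <= n)%nat ->
  (forall t i, 0 <= t <= 1 -> Rabs (fext n f i (cx c t)) <= B) ->
  Rabs (snd (s m) j - snd (s k) j) <= (1 + 2 * (M + 1) * B / C) * curve_length n f eta c.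
Proof.
  intros Hk Ha Hj Hlen HB Hjn Hfb.
  assert (HM0 : 0 <= M) by (pose proof (HM k Hk); pose proof (bracket_ge_1 n (snd (s k))); lra).
  assert (Hreg := short_curve_region c k m Hk Ha Hj Hlen).
  pose proof (vertical_lipschitz n f eta c Ha Hfc Hec C (M + 1) B 1 j (exp_pos _) ltac:(lra) HB Hjn
    (fun t Ht => proj2 (Hreg t Ht)) (fun t i Ht Hi => proj1 (Hreg t Ht) i Hi) Hfb ltac:(lra)) as Hv.
  rewrite arclength_1 in Hv. destruct Hj as [_ [_ J]]. destruct (J j Hjn) as [J0 J1].
  rewrite J0, J1 in Hv. exact Hv.
Qed.

Lemma abscissa_cauchy : exists x : R, is_lim_seq (fun k => fst (s k)) x.
Proof.
  apply cauchy_seq_converges. intros eps Heps.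
  assert (HC : 0 < C) by apply exp_pos.
  destruct (Hcauchy (Rmin 1 (C * eps))) as [N HN]; [apply Rmin_pos; nra|].
  exists (max N N0). intros k m Hk Hm.
  destruct (HN m k ltac:(lia) ltac:(lia)) as [c [Ha [Hj Hlen]]].
  pose proof (Rmin_l 1 (C * eps)). pose proof (Rmin_r 1 (C * eps)).
  pose proof (short_curve_abscissa c m k ltac:(lia) Ha Hj ltac:(lra) 1 ltac:(lra)) as Hx.
  destruct Hj as [_ [J1 _]]. rewrite J1 in Hx.
  cbv beta. apply (Rmult_lt_reg_l C); [exact HC|]. lra.
Qed.

Lemma vertical_cauchy (x : R) : is_lim_seq (fun k => fst (s k)) x ->
  forall j, (j <= n)%nat -> exists v : R, is_lim_seq (fun k => snd (s k) j) v.
Proof.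
  intros Hx j Hj.
  assert (HC : 0 < C) by apply exp_pos.
  (* Near the limit abscissa x the f_i are bounded by B, and late terms are near x. *)
  destruct (fext_locally_bounded n f x Hfc) as [d [B [Hd [HB Hbd]]]].
  destruct (lim_seq_eventually _ _ Hx (d / 2) ltac:(lra)) as [N1 HN1].
  set (K := 1 + 2 * (M + 1) * B / C).
  assert (HK : 0 < K).
  { unfold K. pose proof (HM N0 (le_n _)). pose proof (bracket_ge_1 n (snd (s N0))).
    pose proof (Rdiv_le_0_compat (2 * (M + 1) * B) C ltac:(nra) HC). lra. }
  apply cauchy_seq_converges. intros eps Heps.
  set (e := Rmin (Rmin 1 (C * d / 2)) (eps / (2 * K))).
  assert (He : 0 < e) by (repeat apply Rmin_pos; try nra; apply Rdiv_lt_0_compat; lra).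
  assert (He1 : e <= 1) by (apply (Rle_trans _ _ _ (Rmin_l _ _)), Rmin_l).
  assert (He2 : e <= C * d / 2) by (apply (Rle_trans _ _ _ (Rmin_l _ _)), Rmin_r).
  assert (He3 : e <= eps / (2 * K)) by apply Rmin_r.
  destruct (Hcauchy e He) as [N HN]. exists (max (max N N0) N1). intros k m Hk Hm.
  destruct (HN m k ltac:(lia) ltac:(lia)) as [c [Ha [Hj' Hlen]]].
  (* A curve of length < e from s m stays where the f_i are bounded by B. *)
  assert (Hfb : forall t i, 0 <= t <= 1 -> Rabs (fext n f i (cx c t)) <= B).
  { intros t i Ht. apply Hbd.
    pose proof (short_curve_abscissa c m k ltac:(lia) Ha Hj' ltac:(lra) t Ht).
    assert (Hclose : Rabs (cx c t - fst (s m)) < d / 2) by (apply (Rmult_lt_reg_l C); lra).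
    specialize (HN1 m ltac:(lia)).
    replace (cx c t - x) with ((cx c t - fst (s m)) + (fst (s m) - x)) by ring.
    eapply Rle_lt_trans; [apply Rabs_triang|]. lra. }
  pose proof (short_curve_vertical c m k B j ltac:(lia) Ha Hj' ltac:(lra) HB Hj Hfb) as Hv.
  fold K in Hv. cbv beta.
  assert (Hsmall : K * curve_length n f eta c <= K * (eps / (2 * K))) by (apply Rmult_le_compat_l; lra).
  replace (K * (eps / (2 * K))) with (eps / 2) in Hsmall by (field; lra). lra.
Qed.

End CauchyCoordinates.

Lemma dist_cauchy_coord_lim (n : nat) (f : nat -> R -> R) (eta : R -> R -> R) (Lam : R) (s : nat -> point) :
  (forall j x, continuous (fext n f j) x) ->
  (forall x u, continuous (fun p : R * R => eta (fst p) (snd p)) (x, u)) ->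
  0 <= Lam -> (forall x u, exp (- Lam * Rabs u) <= eta x u) ->
  dist_cauchy n f eta s -> exists p, coord_lim n s p.
Proof.
  intros Hfc Hec HLam Hlow Hcauchy.
  destruct (tail_bracket_bounded n f eta s Hfc Hec Hcauchy) as [N0 [M HM]].
  destruct (abscissa_cauchy n f eta Lam s Hfc Hec HLam Hlow Hcauchy N0 M HM) as [x Hx].
  assert (Hv := vertical_cauchy n f eta Lam s Hfc Hec HLam Hlow Hcauchy N0 M HM x Hx).
  exists (x, fun j => real (Lim_seq (fun k => snd (s k) j))). split; [exact Hx|].
  intros j Hj. destruct (Hv j Hj) as [v Hvj]. simpl.
  now rewrite (is_lim_seq_unique _ _ Hvj).
Qed.

(** * Coordinatewise convergence implies convergence for the distance *)

Definition segment (p q : point) : curve :=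
  mkCurve (fun t => fst p + t * (fst q - fst p)) (fun j t => snd p j + t * (snd q j - snd p j)).

Lemma affine_derive (a b t : R) : is_derive (fun s => a + s * b) t b.
Proof. auto_derive; [exact I|ring]. Qed.

Lemma segment_admissible (n : nat) (p q : point) : admissible n (segment p q).
Proof.
  assert (H : forall a b, Defs.C1 (fun t => a + t * b)).
  { intros a b. split; [intros t; exists b; apply affine_derive|].
    intros t. apply (continuous_ext (fun _ => b)); [|apply continuous_const].
    intros s. symmetry. apply is_derive_unique, affine_derive. }
  split; [apply H|intros; apply H].
Qed.

Lemma segment_joins (n : nat) (p q : point) : joins n (segment p q) p q.
Proof. unfold joins; simpl. repeat split; ring. Qed.

Lemma affine_close (a b t : R) : 0 <= t <= 1 -> Rabs (a + t * (b - a) - b) <= Rabs (a - b).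
Proof.
  intros Ht. replace (a + t * (b - a) - b) with ((1 - t) * (a - b)) by ring.
  rewrite Rabs_mult, (Rabs_right (1 - t)) by lra. pose proof (Rabs_pos (a - b)). nra.
Qed.

Lemma length_le_of_speed_le (n : nat) (f : nat -> R -> R) (eta : R -> R -> R) (c : curve) (K : R) :
  admissible n c -> (forall j x, continuous (fext n f j) x) ->
  (forall x u, continuous (fun p : R * R => eta (fst p) (snd p)) (x, u)) ->
  (forall t, 0 <= t <= 1 -> speed n f eta c t <= K) -> curve_length n f eta c <= K.
Proof.
  intros Ha Hf He HK. unfold curve_length. fold (speed n f eta c).
  apply Rle_trans with (RInt (fun _ => K) 0 1).
  - apply RInt_le; [lra|apply ex_RInt_speed; auto|apply ex_RInt_const|intros; apply HK; lra].
  - rewrite RInt_const. change (scal (1 - 0) K) with ((1 - 0) * K). lra.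
Qed.

Lemma segment_length_small (n : nat) (f : nat -> R -> R) (eta : R -> R -> R) (p : point) :
  (forall j x, continuous (fext n f j) x) ->
  (forall x u, continuous (fun p : R * R => eta (fst p) (snd p)) (x, u)) ->
  (forall x u, 0 < eta x u) ->
  exists delta K, 0 < delta /\ 0 <= K /\ forall q e, 0 <= e <= delta ->
    Rabs (fst q - fst p) <= e -> (forall j, (j <= n)%nat -> Rabs (snd q j - snd p j) <= e) ->
    curve_length n f eta (segment q p) <= K * e.
Proof.
  intros Hfc Hec Hpos.
  destruct (fext_locally_bounded n f (fst p) Hfc) as [d0 [B [Hd0 [_ Hbd]]]].
  destruct (locally_bounded_above2 (fun x u => eta x u) (fst p) (snd p 0%nat) (Hec _ _)) as [d1 [Hd1 Hloc]].
  set (M := bracket n (snd p) + 1).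
  assert (HM : 0 <= M) by (pose proof (bracket_ge_1 n (snd p)); unfold M; lra).
  exists (Rmin 1 (Rmin (d0 / 2) (d1 / 2))),
         (sqrt ((eta (fst p) (snd p 0%nat) + 1) ^ 2 + INR (S n) * (1 + 2 * M * B) ^ 2)).
  split; [repeat apply Rmin_pos; lra|]. split; [apply sqrt_pos|]. intros q e He Hx Hv.
  assert (He1 : e <= 1) by (apply (Rle_trans _ _ _ (proj2 He)), Rmin_l).
  assert (He2 : e < d0) by (eapply Rle_lt_trans; [apply (Rle_trans _ _ _ (proj2 He)), (Rle_trans _ _ _ (Rmin_r _ _)), Rmin_l|lra]).
  assert (He3 : e < d1) by (eapply Rle_lt_trans; [apply (Rle_trans _ _ _ (proj2 He)), (Rle_trans _ _ _ (Rmin_r _ _)), Rmin_r|lra]).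
  apply length_le_of_speed_le; auto; [apply segment_admissible|]. intros t Ht.
  assert (Hder : forall a b, Derive (fun s => a + s * b) t = b) by (intros; apply is_derive_unique, affine_derive).
  apply (speed_le n f eta (segment q p) t e (eta (fst p) (snd p 0%nat) + 1) M B); simpl; try lra; rewrite ?Hder.
  - split; [left; apply Hpos|]. apply Hloc.
    + eapply Rle_lt_trans; [apply affine_close; exact Ht|lra].
    + eapply Rle_lt_trans; [apply affine_close; exact Ht|]. specialize (Hv 0%nat ltac:(lia)). lra.
  - rewrite Rabs_minus_sym. exact Hx.
  - intros j Hj. rewrite Hder, Rabs_minus_sym. auto.
  - intros i Hi. specialize (Hv i Hi). pose proof (abs_le_bracket n (snd p) i Hi).
    pose proof (affine_close (snd q i) (snd p i) t Ht).
    pose proof (Rabs_triang_inv (snd q i + t * (snd p i - snd q i)) (snd p i)). unfold M. lra.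
  - intros i. apply Hbd. eapply Rle_lt_trans; [apply affine_close; exact Ht|lra].
Qed.

Lemma coord_lim_dist (n : nat) (f : nat -> R -> R) (eta : R -> R -> R) (s : nat -> point) (p : point) :
  (forall j x, continuous (fext n f j) x) ->
  (forall x u, continuous (fun p : R * R => eta (fst p) (snd p)) (x, u)) ->
  (forall x u, 0 < eta x u) -> coord_lim n s p ->
  forall eps, 0 < eps -> exists N, forall k, (N <= k)%nat -> dist_lt n f eta (s k) p eps.
Proof.
  intros Hfc Hec Hpos [Hx Hv] eps Heps.
  destruct (segment_length_small n f eta p Hfc Hec Hpos) as [delta [K [Hdelta [HK Hseg]]]].
  set (e := Rmin delta (eps / (2 * (K + 1)))).
  assert (He : 0 < e) by (apply Rmin_pos; [lra|apply Rdiv_lt_0_compat; lra]).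
  destruct (lim_seq_eventually _ _ Hx e He) as [N1 HN1].
  destruct (eventually_forall_le (fun j k => Rabs (snd (s k) j - snd p j) < e) n) as [N2 HN2].
  { intros j Hj. apply lim_seq_eventually; auto. }
  exists (max N1 N2). intros k Hk. exists (segment (s k) p).
  split; [apply segment_admissible|]. split; [apply segment_joins|].
  assert (Hlen : curve_length n f eta (segment (s k) p) <= K * e).
  { apply Hseg; [split; [lra|apply Rmin_l]|left; apply HN1; lia|intros j Hj; left; apply HN2; lia]. }
  assert (Hsmall : K * e <= K * (eps / (2 * (K + 1)))) by (apply Rmult_le_compat_l; [lra|apply Rmin_r]).
  assert (K * (eps / (2 * (K + 1))) < eps).
  { apply (Rmult_lt_reg_r (2 * (K + 1))); [lra|].
    replace (K * (eps / (2 * (K + 1))) * (2 * (K + 1))) with (K * eps) by (field; lra). nra. }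
  lra.
Qed.

Theorem proposition3p3 (n : nat) (f : nat -> R -> R) (eta : R -> R -> R) :
  (forall j, (1 <= j)%nat -> (j <= n)%nat -> smooth1 (f j)) ->
  smooth2 eta ->
  (forall x u, 0 < eta x u) ->
  (forall x, eta x 0 = 1) ->
  (forall x u, Scal eta x u < 0) ->
  (forall x u, Rabs (k_gamma eta x) <= sqrt (1 / 2 * Rabs (Scal eta x u))) ->
  (exists Lambda : R, forall x, Rabs (k_gamma eta x) <= Lambda) ->
  metric_complete n f eta.
Proof.
  intros Hf Hs Hpos H1 HS Hk [Lam HL] s Hcauchy.
  assert (Hfc := fext_continuous n f Hf).
  assert (Hec := smooth2_continuous eta Hs).
  assert (HLam : 0 <= Lam) by (pose proof (HL 0); pose proof (Rabs_pos (k_gamma eta 0)); lra).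
  assert (Hlow := eta_lower_bound eta Lam Hs Hpos H1 HS Hk HL).
  destruct (dist_cauchy_coord_lim n f eta Lam s Hfc Hec HLam Hlow Hcauchy) as [p Hp].
  exists p. exact (coord_lim_dist n f eta s p Hfc Hec Hpos Hp).
Qed.
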